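(* For any $\mathcal{H}\subseteq\{0,1\}^{\mathcal{X}}$ and $w\in\mathbb{N}$ with $\operatorname{AL}_w(\mathcal{H})<\infty$, there exists a deterministic online learner which, under full-information feedback and on any sequence $(x_1,y_1),\dots,(x_T,y_T)$ realizable by $\mathcal{H}$ (i.e. $y_t=h(x_t)$ for some $h\in\mathcal{H}$ and all $t$), makes at most $w-1$ false negative mistakes and at most $\operatorname{AL}_w(\mathcal{H})$ false positive mistakes.
   Context: Online binary classification with full-information feedback: in each round $t$ the learner receives $x_t\in\mathcal{X}$, predicts $\hat y_t\in\{0,1\}$, and then observes the true label $y_t$. A false positive mistake is a round with $\hat y_t=1,y_t=0$; a false negative mistake is a round with $\hat y_t=0,y_t=1$. AL tree of width $w\in\mathbb{N}=\{1,2,\dots\}$ and depth $d$: a binary string $u$ is an internal node if $|u|<d$ and $u$ has fewer than $w$ ones; the tree assigns $x_u\in\mathcal{X}$ to each internal node. A path is a binary string $\sigma$ whose proper prefixes are all internal nodes but which is not itself one. The tree is shattered by $\mathcal{H}$ if for every path $\sigma$ some $h\in\mathcal{H}$ satisfies $h(x_{(\sigma_1,\dots,\sigma_{i-1})})=\sigma_i$ for all $i\le|\sigma|$. $\operatorname{AL}_w(\mathcal{H})$ is the largest $d$ such that such a tree of width $w$ and depth $d$ is shattered ($\infty$ if unbounded, $0$ if none). *)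

From mathcomp Require Import all_boot.
Set Implicit Arguments. Unset Strict Implicit. Unset Printing Implicit Defensive.

Definition hclass (X : Type) := (X -> bool) -> Prop.

(* AL trees. A tree is a labelling of binary strings (seq bool) by points of X;
   only the labels on internal nodes matter. *)
Definition al_internal (w d : nat) (u : seq bool) : bool :=
  (size u < d) && (count id u < w).

Definition al_path (w d : nat) (sigma : seq bool) : Prop :=
  (forall i, i < size sigma -> al_internal w d (take i sigma)) /\
  ~~ al_internal w d sigma.

(* The tree x (width w, depth d) is shattered by H: for every path sigma some
   h in H satisfies h(x_{(sigma_1..sigma_{i-1})}) = sigma_i for all i <= |sigma|
   (0-indexed below: prefix take i sigma, label nth false sigma i). *)
Definition al_shattered X (H : hclass X) (w d : nat) (x : seq bool -> X) : Prop :=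
  forall sigma, al_path w d sigma ->
    exists h, H h /\
      forall i, i < size sigma -> h (x (take i sigma)) = nth false sigma i.

(* AL_w(H) = D (a finite value): D is the largest depth of a shattered width-w
   tree, with D = 0 if no such tree is shattered. *)
Definition AL_is X (H : hclass X) (w D : nat) : Prop :=
  (D = 0 \/ exists x : seq bool -> X, al_shattered H w D x) /\
  (forall d (x : seq bool -> X), al_shattered H w d x -> d <= D).

(* Deterministic online learner: prediction from the history of labelled
   examples (chronological order) and the current instance. *)
Definition learner (X : Type) := seq (X * bool) -> X -> bool.

Fixpoint fp_mistakes X (L : learner X) (hist s : seq (X * bool)) : nat :=
  match s with
  | [::] => 0
  | (x, y) :: s' => (L hist x && ~~ y) + fp_mistakes L (rcons hist (x, y)) s'
  end.

Fixpoint fn_mistakes X (L : learner X) (hist s : seq (X * bool)) : nat :=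
  match s with
  | [::] => 0
  | (x, y) :: s' => (~~ L hist x && y) + fn_mistakes L (rcons hist (x, y)) s'
  end.

Definition realizable X (H : hclass X) (s : seq (X * bool)) : Prop :=
  exists h, H h /\ all (fun p : X * bool => h p.1 == p.2) s.

From mathcomp Require Import all_boot.
From mathcomp Require Import zify.
From Stdlib Require Import Classical ClassicalEpsilon.
Set Implicit Arguments. Unset Strict Implicit.

(* The learner keeps the version space V and a current width w' (initially w,
   decreased after each false negative), and predicts 0 on x exactly when
   restricting V to h(x) = 0 loses no shattered depth at width w'.  After a
   false positive the maximal shattered depth strictly drops.  After a false
   negative, if m is the maximal depth shattered at width w', the 0-side still
   shatters depth m, so the 1-side cannot shatter depth m at width w'-1 (gluing
   the two trees would shatter depth m+1); as the 1-side is nonempty this also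
   forces w'-1 > 0.  Hence at most D false positives and w-1 false negatives. *)

Lemma ex_max_nat (P : nat -> Prop) B : P 0 -> (forall n, P n -> n <= B) ->
  exists2 m, P m & forall n, P n -> n <= m.
Proof.
elim: B => [|B IH] P0 HB; first by exists 0.
have [PB|nPB] := classic (P B.+1); first by exists B.+1.
apply: IH => // n Pn; move: (HB n Pn); rewrite leq_eqVlt => /orP[/eqP En|] //.
by rewrite En in Pn.
Qed.

Lemma al_internal_succ w d u : al_internal w d u -> al_internal w d.+1 u.
Proof. by rewrite /al_internal => /andP[Hd ->]; rewrite andbT ltnW. Qed.

Lemma al_internal_cons w d b u : 0 < w ->
  al_internal w d.+1 (b :: u) = al_internal (if b then w.-1 else w) d u.
Proof. by case: w => // w _; case: b; rewrite /al_internal /= ?add1n ltnS. Qed.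

Lemma al_path_size w d s : al_path w d s -> size s <= d.
Proof.
move=> [Hp _]; rewrite leqNgt; apply/negP => Hd.
by have := Hp d Hd; rewrite /al_internal size_take Hd ltnn.
Qed.

Lemma al_path_leaf w d s : ~~ al_internal w d [::] -> al_path w d s -> s = [::].
Proof. by move=> Hroot; case: s => // b s [/(_ 0 isT) /= Hi _]; rewrite Hi in Hroot. Qed.

Lemma al_path_cons w d b s : 0 < w ->
  al_path w d.+1 (b :: s) -> al_path (if b then w.-1 else w) d s.
Proof.
move=> w0 [Hp Hn]; rewrite al_internal_cons // in Hn; split=> // i Hi.
by have := Hp i.+1 Hi; rewrite /= al_internal_cons.
Qed.

(* A path of depth d is a path of depth d+1, or becomes one after one more 0. *)
Lemma al_path_ext w d s : al_path w d s -> exists e, al_path w d.+1 (s ++ e).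
Proof.
move=> Hs; have Hsz := al_path_size Hs; case: Hs => Hp Hn.
have Hp' i : i < size s -> al_internal w d.+1 (take i s).
  by move=> Hi; apply: al_internal_succ; apply: Hp.
case Hc: (count id s < w); last first.
  by exists [::]; rewrite cats0; split=> //; rewrite /al_internal Hc andbF.
have Hd : size s = d by move: Hn; rewrite /al_internal Hc andbT -leqNgt; lia.
exists [:: false]; split.
- move=> i; rewrite size_cat addn1 ltnS leq_eqVlt => /orP[/eqP ->|Hi].
    by rewrite take_size_cat // /al_internal Hc Hd andbT.
  by rewrite takel_cat ?Hp' // ltnW.
- by rewrite /al_internal size_cat Hd addn1 ltnn.
Qed.

Section Shattering.

Variable X : Type.
Implicit Types (V : hclass X) (T : seq bool -> X).

Definition restrict V (x : X) (b : bool) : hclass X := fun h => V h /\ h x = b.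

Definition shattered V w d := exists T, al_shattered V w d T.

Definition depth_le V w B := forall d, shattered V w d -> d <= B.

Lemma al_shattered_leaf V w d T h :
  V h -> ~~ al_internal w d [::] -> al_shattered V w d T.
Proof. by move=> Vh Hroot s /(al_path_leaf Hroot) ->; exists h. Qed.

Lemma al_shattered_sub V V' w d T : (forall h, V h -> V' h) ->
  al_shattered V w d T -> al_shattered V' w d T.
Proof.
move=> VV' Hs s /Hs [h [Vh Hh]].
by exists h; split=> //; apply: VV'.
Qed.

Lemma al_shattered_pred V w d T : al_shattered V w d.+1 T -> al_shattered V w d T.
Proof.
move=> Hs s /al_path_ext [e /Hs [h [Vh Hh]]]; exists h; split=> // i Hi.
have := Hh i; rewrite size_cat takel_cat ?(ltnW Hi) // nth_cat Hi.
by apply; rewrite ltn_addr.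
Qed.

Lemma al_shattered_le V w d d' T :
  d' <= d -> al_shattered V w d T -> al_shattered V w d' T.
Proof.
move=> /subnK <-; elim: (d - d') => // n IH.
by rewrite addSn => /al_shattered_pred.
Qed.

Definition al_join (x : X) T0 T1 : seq bool -> X :=
  fun u => if u is b :: u' then (if b then T1 u' else T0 u') else x.

Lemma al_shattered_join V x w d T0 T1 : 0 < w ->
  al_shattered (restrict V x false) w d T0 ->
  al_shattered (restrict V x true) w.-1 d T1 ->
  al_shattered V w d.+1 (al_join x T0 T1).
Proof.
move=> w0 S0 S1 [|b s] Hs.
  by case: Hs => _; rewrite /al_internal /= w0.
have /(al_path_cons w0) := Hs; case: b {Hs} => [/S1|/S0] [h [[Vh hx] Hh]];
  by exists h; split=> //; case.
Qed.

Lemma shattered_succ V x w d : 0 < w ->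
  shattered (restrict V x false) w d -> shattered (restrict V x true) w.-1 d ->
  shattered V w d.+1.
Proof. by move=> w0 [T0 S0] [T1 S1]; exists (al_join x T0 T1); apply: al_shattered_join. Qed.

Lemma depth_le_restrict V w x b B :
  depth_le V w B -> depth_le (restrict V x b) w B.
Proof. by move=> HB d [T S]; apply: HB; exists T; apply: al_shattered_sub S => h []. Qed.

Definition zero_safe V w x :=
  forall d, shattered V w d -> shattered (restrict V x false) w d.

Lemma depth_le_restrict_false_unsafe V w x B h : restrict V x false h ->
  ~ zero_safe V w x -> depth_le V w B -> 0 < B /\ depth_le (restrict V x false) w B.-1.
Proof.
move=> Vh unsafe HB.
have [d Vd nV0d] : exists2 d, shattered V w d & ~ shattered (restrict V x false) w d.
  by apply: NNPP => none; apply: unsafe => d Vd; apply: NNPP => nV0d; apply: none; exists d.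
have lt_d d' : shattered (restrict V x false) w d' -> d' < d.
  move=> [T S]; rewrite ltnNge; apply/negP => le_dd'.
  by apply: nV0d; exists T; apply: al_shattered_le S.
have d0 : 0 < d by apply: lt_d; exists (fun _ => x); apply: al_shattered_leaf Vh _.
by have := HB d Vd; split=> [|d' /lt_d]; lia.
Qed.

Lemma depth_le_restrict_true_safe V w x B h : 0 < w -> restrict V x true h ->
  zero_safe V w x -> depth_le V w B -> 0 < w.-1 /\ depth_le (restrict V x true) w.-1 B.
Proof.
move=> w0 [Vh hx] safe HB.
have V0 : shattered V w 0 by exists (fun _ => x); apply: al_shattered_leaf Vh _.
have [m Vm max_m] := ex_max_nat V0 HB.
have lt_m d : shattered (restrict V x true) w.-1 d -> d < m.
  move=> [T S]; rewrite ltnNge; apply/negP => le_md.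
  have V1m : shattered (restrict V x true) w.-1 m by exists T; apply: al_shattered_le S.
  by have := max_m _ (shattered_succ w0 (safe m Vm) V1m); rewrite ltnn.
split=> [|d /lt_m]; last by have := HB m Vm; lia.
rewrite lt0n; apply/negP => /eqP w1.
suff: m < m by rewrite ltnn.
apply: lt_m; exists (fun _ => x).
by apply: al_shattered_leaf (conj Vh hx) _; rewrite w1 /al_internal andbF.
Qed.

End Shattering.

Section Learner.

Variable X : Type.
Implicit Types (V : hclass X) (hist s : seq (X * bool)).

Definition al_predict V w (x : X) : bool :=
  if excluded_middle_informative (zero_safe V w x) then false else true.

Definition al_step (st : hclass X * nat) (p : X * bool) : hclass X * nat :=
  (restrict st.1 p.1 p.2, if ~~ al_predict st.1 st.2 p.1 && p.2 then st.2.-1 else st.2).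

Definition al_learner (H : hclass X) w : learner X :=
  fun hist => let st := foldl al_step (H, w) hist in al_predict st.1 st.2.

Lemma al_learner_mistakes H w s hist V w' B :
  foldl al_step (H, w) hist = (V, w') ->
  (exists h, V h /\ all (fun p : X * bool => h p.1 == p.2) s) ->
  0 < w' -> depth_le V w' B ->
  fn_mistakes (al_learner H w) hist s <= w'.-1 /\
  fp_mistakes (al_learner H w) hist s <= B.
Proof.
elim: s hist V w' B => [|[x y] s IH] hist V w' B Hst //= [h [Vh /andP[/eqP hx Hs]]] w0 HB.
have Hst' : foldl al_step (H, w) (rcons hist (x, y)) = al_step (V, w') (x, y).
  by rewrite foldl_rcons Hst.
have {Hst'} IHxy B' := IH _ _ _ B' Hst' (ex_intro _ h (conj (conj Vh hx) Hs)).
rewrite /al_learner Hst -/(al_learner H w) /al_step /al_predict /= in IHxy *.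
case: excluded_middle_informative IHxy => [safe|unsafe]; case: y hx => hx /= IHxy.
- have [w1 HB1] := depth_le_restrict_true_safe w0 (conj Vh hx) safe HB.
  by have [] := IHxy _ w1 HB1; lia.
- exact: IHxy w0 (depth_le_restrict HB).
- exact: IHxy w0 (depth_le_restrict HB).
- have [B0 HB1] := depth_le_restrict_false_unsafe (conj Vh hx) unsafe HB.
  by have [] := IHxy _ w0 HB1; lia.
Qed.

End Learner.

Theorem lemma3 (X : Type) (H : hclass X) (w D : nat) :
  0 < w -> AL_is H w D ->
  exists L : learner X,
    forall s : seq (X * bool), realizable H s ->
      fn_mistakes L [::] s <= w.-1 /\ fp_mistakes L [::] s <= D.
Proof.
move=> w0 [_ HD]; exists (al_learner H w) => s [h [Hh Hs]].
apply: (al_learner_mistakes (hist := [::])) => //; first by exists h.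
by move=> d [T S]; apply: HD S.
Qed.
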